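(* Let $A\in\mathcal M(m;\mathbb C)$ and let $\mathcal G_A$ be the set of limit points of the sequence $(A^n)_{n\in\mathbb N}$ (i.e. limits of convergent subsequences). If $\mathcal G_A$ is nonempty, then $\mathcal G_A$ is an abelian compact group under matrix multiplication. *)

From Stdlib Require Import Reals List.
From mathcomp Require Import ssreflect ssrbool eqtype ssrnat seq fintype.

Set Implicit Arguments.

Local Open Scope R_scope.

Definition C := (R * R)%type.
Definition C0 : C := (0, 0).
Definition C1 : C := (1, 0).
Definition Cadd (x y : C) : C := (fst x + fst y, snd x + snd y).
Definition Cmul (x y : C) : C :=
  (fst x * fst y - snd x * snd y, fst x * snd y + snd x * fst y).

Definition Mat (m : nat) := 'I_m -> 'I_m -> C.

Definition mmul (m : nat) (A B : Mat m) : Mat m :=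
  fun i j => foldr (fun k acc => Cadd (Cmul (A i k) (B k j)) acc) C0 (enum 'I_m).

Definition mid (m : nat) : Mat m := fun i j => if i == j then C1 else C0.

Fixpoint mpow (m : nat) (A : Mat m) (n : nat) : Mat m :=
  match n with
  | O => @mid m
  | S n' => mmul A (mpow A n')
  end.

(* Convergence of a sequence of matrices (entrywise, real and imaginary parts;
   this is the usual topology of C^(m*m)). *)
Definition mat_cv (m : nat) (u : nat -> Mat m) (L : Mat m) : Prop :=
  forall i j, Un_cv (fun n => fst (u n i j)) (fst (L i j)) /\
              Un_cv (fun n => snd (u n i j)) (snd (L i j)).

Definition limit_points (m : nat) (A : Mat m) : Mat m -> Prop :=
  fun L => exists phi : nat -> nat,
    (forall n, Nat.lt (phi n) (phi (S n))) /\ mat_cv (fun n => mpow A (phi n)) L.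

(* Open sets of M(m;C) (for the box metric, equivalent to any norm). *)
Definition mat_open (m : nat) (U : Mat m -> Prop) : Prop :=
  forall X, U X -> exists eps, 0 < eps /\
    forall Y, (forall i j, Rabs (fst (Y i j) - fst (X i j)) < eps /\
                           Rabs (snd (Y i j) - snd (X i j)) < eps) -> U Y.

Definition mat_compact (m : nat) (K : Mat m -> Prop) : Prop :=
  forall (I : Type) (U : I -> Mat m -> Prop),
    (forall a, mat_open (U a)) ->
    (forall X, K X -> exists a, U a X) ->
    exists l : list I, forall X, K X -> exists a, List.In a l /\ U a X.

(* G is an abelian group under matrix multiplication (its identity element
   need not be the identity matrix). *)
Definition abelian_group_mul (m : nat) (G : Mat m -> Prop) : Prop :=
  (forall X Y, G X -> G Y -> G (mmul X Y)) /\
  (forall X Y Z, G X -> G Y -> G Z -> mmul X (mmul Y Z) = mmul (mmul X Y) Z) /\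
  exists E, G E /\
    (forall X, G X -> mmul E X = X /\ mmul X E = X) /\
    (forall X, G X -> exists Y, G Y /\ mmul X Y = E /\ mmul Y X = E) /\
    (forall X Y, G X -> G Y -> mmul X Y = mmul Y X).

(* A convergent subsequence of (A^n) is bounded.  After a Schur
   triangularization, induction on the size shows that then all powers of A are
   bounded: the diagonal entry l of a triangular block satisfies |l| <= 1, and when
   |l| = 1 the off-diagonal part stays bounded only because a power-bounded matrix
   has no Jordan chain of length two at the eigenvalue 1.  With (A^n) bounded,
   Bolzano-Weierstrass and a diagonal argument make G_A sequentially compact, hence
   compact.  From A^(p n) A^(q n) = A^(p n + q n), G_A is closed under products and
   commutative; for X = lim A^(p n) and Y = lim A^(q n), a limit point Z of
   suitable powers A^(q (g n) - p n) satisfies Z X = Y.  A commutative semigroup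
   in which every equation Z X = Y is solvable is a group. *)

From Pilot Require Import Defs.
From Stdlib Require Import Reals List.
From mathcomp Require Import ssreflect ssrbool eqtype ssrnat seq fintype.
From Stdlib Require Import Lra Lia FunctionalExtensionality IndefiniteDescription Classical.
From mathcomp Require Import all_boot all_order all_algebra complex Rstruct ring.

Set Implicit Arguments.
Unset Strict Implicit.
Unset Printing Implicit Defensive.
Import Order.TTheory GRing.Theory Num.Theory.

Section MatrixNorm.
Local Open Scope ring_scope.
Variable R : numDomainType.

Definition mxnorm m n (X : 'M[R]_(m, n)) : R := \sum_i \sum_j `|X i j|.

Lemma mxnorm_ge0 m n (X : 'M[R]_(m, n)) : 0 <= mxnorm X.
Proof. by apply: sumr_ge0 => i _; apply: sumr_ge0. Qed.

Lemma mxnorm_entry m n (X : 'M[R]_(m, n)) i j : `|X i j| <= mxnorm X.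
Proof.
rewrite /mxnorm (bigD1 i) //= (bigD1 j) //= -addrA lerDl.
apply: addr_ge0; first exact: sumr_ge0.
by apply: sumr_ge0 => ? _; apply: sumr_ge0.
Qed.

Lemma mxnorm_eq0 m n (X : 'M[R]_(m, n)) : mxnorm X = 0 -> X = 0.
Proof.
move=> X0; apply/matrixP => i j; rewrite mxE; apply/eqP; rewrite -normr_eq0.
by rewrite eq_le normr_ge0 andbT -X0 mxnorm_entry.
Qed.

Lemma mxnorm0 m n : mxnorm (0 : 'M[R]_(m, n)) = 0.
Proof. by rewrite /mxnorm big1 // => i _; rewrite big1 // => j _; rewrite mxE normr0. Qed.

Lemma mxnormN m n (X : 'M[R]_(m, n)) : mxnorm (- X) = mxnorm X.
Proof. by apply: eq_bigr => i _; apply: eq_bigr => j _; rewrite mxE normrN. Qed.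

Lemma mxnormD m n (X Y : 'M[R]_(m, n)) : mxnorm (X + Y) <= mxnorm X + mxnorm Y.
Proof.
rewrite /mxnorm -big_split /=; apply: ler_sum => i _.
by rewrite -big_split /=; apply: ler_sum => j _; rewrite mxE ler_normD.
Qed.

Lemma mxnormB m n (X Y : 'M[R]_(m, n)) : mxnorm (X - Y) <= mxnorm X + mxnorm Y.
Proof. by rewrite -(mxnormN Y) mxnormD. Qed.

Lemma mxnormZ m n c (X : 'M[R]_(m, n)) : mxnorm (c *: X) = `|c| * mxnorm X.
Proof.
rewrite /mxnorm mulr_sumr; apply: eq_bigr => i _; rewrite mulr_sumr.
by apply: eq_bigr => j _; rewrite mxE normrM.
Qed.

Lemma mxnormMn m n (X : 'M[R]_(m, n)) k : mxnorm (X *+ k) = k%:R * mxnorm X.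
Proof. by rewrite -scaler_nat mxnormZ normr_nat. Qed.

Lemma mxnormM m n p (X : 'M[R]_(m, n)) (Y : 'M[R]_(n, p)) :
  mxnorm (X *m Y) <= mxnorm X * mxnorm Y.
Proof.
rewrite /mxnorm mulr_suml; apply: ler_sum => i _.
apply: (@le_trans _ _ (\sum_j \sum_k `|X i k| * `|Y k j|)).
  apply: ler_sum => j _; rewrite mxE.
  by apply: (le_trans (ler_norm_sum _ _ _)); apply: ler_sum => k _; rewrite normrM.
rewrite exchange_big /= mulr_suml; apply: ler_sum => k _.
rewrite -mulr_sumr; apply: ler_wpM2l => //.
rewrite (bigD1 k) //= lerDl; by apply: sumr_ge0 => ? _; apply: sumr_ge0.
Qed.

Lemma mxnorm_tr m n (X : 'M[R]_(m, n)) : mxnorm X^T = mxnorm X.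
Proof.
rewrite /mxnorm exchange_big.
by apply: eq_bigr => i _; apply: eq_bigr => j _; rewrite mxE.
Qed.

Lemma mxnorm_scalar1 (x : R) : mxnorm (x%:M : 'M_1) = `|x|.
Proof. by rewrite /mxnorm !big_ord1 mxE eqxx mulr1n. Qed.

Lemma mxnorm_block m1 m2 n1 n2 (a : 'M[R]_(m1, n1)) (b : 'M_(m1, n2))
    (c : 'M_(m2, n1)) (d : 'M_(m2, n2)) :
  mxnorm (block_mx a b c d) = mxnorm a + mxnorm b + (mxnorm c + mxnorm d).
Proof.
rewrite /mxnorm big_split_ord /= -!big_split /=; congr (_ + _).
  apply: eq_bigr => i _; rewrite big_split_ord /=.
  by congr (_ + _); apply: eq_bigr => j _; rewrite ?block_mxEul ?block_mxEur.
apply: eq_bigr => i _; rewrite big_split_ord /=.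
by congr (_ + _); apply: eq_bigr => j _; rewrite ?block_mxEdl ?block_mxEdr.
Qed.

End MatrixNorm.

Section MatrixPowers.
Local Open Scope ring_scope.
Variable R : comRingType.

(* ['M_n] is a ring only when [n] is a successor, hence the explicit iteration. *)
Definition mxpow n (A : 'M[R]_n) k := iter k (mulmx A) 1%:M.
Arguments mxpow : simpl never.

Lemma mxpow0 n (A : 'M[R]_n) : mxpow A 0 = 1%:M. Proof. by []. Qed.

Lemma mxpowS n (A : 'M[R]_n) k : mxpow A k.+1 = A *m mxpow A k. Proof. by []. Qed.

Lemma mxpowSr n (A : 'M[R]_n) k : mxpow A k.+1 = mxpow A k *m A.
Proof.
elim: k => [|k IHk]; first by rewrite mxpowS mxpow0 mulmx1 mul1mx.
by rewrite mxpowS {1}IHk mulmxA -mxpowS.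
Qed.

Lemma mxpowD n (A : 'M[R]_n) k l : mxpow A (k + l) = mxpow A k *m mxpow A l.
Proof. by elim: k => [|k IHk]; rewrite ?mul1mx // addSn mxpowS IHk mulmxA. Qed.

Lemma mxpow_conj n (A P Q : 'M[R]_n) k : P *m Q = 1%:M -> Q *m P = 1%:M ->
  mxpow (P *m A *m Q) k = P *m mxpow A k *m Q.
Proof.
move=> PQ QP; elim: k => [|k IHk]; first by rewrite !mxpow0 mulmx1 PQ.
rewrite mxpowS IHk mxpowS !mulmxA; congr (_ *m _).
by rewrite -(mulmxA _ Q P) QP mulmx1.
Qed.

Lemma mxpow_tr n (A : 'M[R]_n) k : mxpow A^T k = (mxpow A k)^T.
Proof.
elim: k => [|k IHk]; first by rewrite !mxpow0 trmx1.
by rewrite mxpowS mxpowSr IHk trmx_mul.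
Qed.

Lemma mxpowZ n c (A : 'M[R]_n) k : mxpow (c *: A) k = c ^+ k *: mxpow A k.
Proof.
elim: k => [|k IHk]; first by rewrite !mxpow0 expr0 scale1r.
by rewrite !mxpowS IHk -scalemxAl -scalemxAr scalerA exprS.
Qed.

Lemma mxpow_fixed m n (A : 'M[R]_n) (v : 'M[R]_(m, n)) k :
  v *m A = v -> v *m mxpow A k = v.
Proof.
by move=> vA; elim: k => [|k IHk]; rewrite ?mulmx1 // mxpowSr mulmxA IHk.
Qed.

Fixpoint corner_pow n (l : R) (b : 'rV[R]_n) (d : 'M[R]_n) k : 'rV[R]_n :=
  if k is k'.+1 then l *: corner_pow l b d k' + b *m mxpow d k' else 0.

Lemma mxpow_block n (l : R) (b : 'rV[R]_n) (d : 'M[R]_n) k :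
  mxpow (block_mx l%:M b 0 d : 'M_(1 + n)) k =
  block_mx (l ^+ k)%:M (corner_pow l b d k) 0 (mxpow d k).
Proof.
elim: k => [|k IHk]; first by rewrite !mxpow0 expr0 -scalar_mx_block.
rewrite mxpowS IHk mulmx_block !mul0mx !mulmx0 !addr0 !add0r mul_scalar_mx.
by rewrite scale_scalar_mx -exprS mul_scalar_mx mxpowS.
Qed.

Lemma sum_mxpow_fixed_range n (S : 'M[R]_n) (b b0 y : 'rV[R]_n) k :
  b0 *m S = b0 -> b = b0 + y *m (1%:M - S) ->
  \sum_(i < k) b *m mxpow S i = b0 *+ k + (y - y *m mxpow S k).
Proof.
move=> b0S ->; elim: k => [|k IHk]; first by rewrite big_ord0 mxpow0 mulmx1 subrr addr0.
rewrite big_ord_recr /= IHk mulmxDl (mxpow_fixed _ b0S) -mulmxA mulmxBl mul1mx -mxpowS.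
by rewrite mulmxBr mulrS addrACA [b0 *+ k + b0]addrC subrKA.
Qed.

End MatrixPowers.

Section PowBounded.
Local Open Scope ring_scope.
Variable R : numDomainType.

Definition pow_bounded_along n (A : 'M[R]_n) (p : nat -> nat) :=
  exists K, forall k, mxnorm (mxpow A (p k)) <= K.

Lemma pow_bounded_along0 (A : 'M[R]_0) p : pow_bounded_along A p.
Proof. by exists 0 => k; rewrite /mxnorm big_ord0. Qed.

Lemma pow_bounded_along_conj n (A P Q : 'M[R]_n) p :
  P *m Q = 1%:M -> Q *m P = 1%:M ->
  pow_bounded_along A p -> pow_bounded_along (P *m A *m Q) p.
Proof.
move=> PQ QP [K AK]; exists (mxnorm P * K * mxnorm Q) => k.
rewrite mxpow_conj //; apply: (le_trans (mxnormM _ _)).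
apply: ler_wpM2r; first exact: mxnorm_ge0.
apply: (le_trans (mxnormM _ _)); apply: ler_wpM2l => //; exact: mxnorm_ge0.
Qed.

Lemma pow_bounded_along_tr n (A : 'M[R]_n) p :
  pow_bounded_along A p -> pow_bounded_along A^T p.
Proof. by move=> [K AK]; exists K => k; rewrite mxpow_tr mxnorm_tr. Qed.

Lemma bernoulli_ineq (x : R) n : 1 <= x -> 1 + n%:R * (x - 1) <= x ^+ n.
Proof.
move=> x_ge1; have x_ge0 : 0 <= x by apply: le_trans x_ge1.
elim: n => [|n IHn]; first by rewrite mul0r addr0 expr0.
apply: (@le_trans _ _ (x * (1 + n%:R * (x - 1)))); last by rewrite exprS ler_wpM2l.
rewrite -subr_ge0.
have -> : x * (1 + n%:R * (x - 1)) - (1 + n.+1%:R * (x - 1)) =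
          n%:R * ((x - 1) * (x - 1)) by rewrite -addn1 natrD; ring.
by apply: mulr_ge0 => //; apply: mulr_ge0; rewrite subr_ge0.
Qed.

End PowBounded.

Notation pow_bounded A := (pow_bounded_along A id).

Section Archimedean.
Local Open Scope ring_scope.

Lemma bounded_multiples_eq0 (R : archiNumFieldType) (c K : R) (p : nat -> nat) :
  (forall k, k <= p k)%N -> 0 <= c -> (forall k, (p k)%:R * c <= K) -> c = 0.
Proof.
move=> p_ge c_ge0 cK; apply/eqP; rewrite eq_le c_ge0 andbT real_leNgt ?ger0_real //.
apply/negP => c_gt0.
have K_ge0 : 0 <= K by apply: le_trans (cK 0%N); apply: mulr_ge0.
have := archi_boundP (divr_ge0 K_ge0 c_ge0); set k := Num.bound _ => Kk.
have : K < (p k)%:R * c.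
  by rewrite -ltr_pdivrMr //; apply: (lt_le_trans Kk); rewrite ler_nat.
by rewrite real_ltNge ?cK // ger0_real // mulr_ge0.
Qed.

End Archimedean.

Local Notation CC := (Rdefinitions.R[i]).

Section ComplexPowers.
Local Open Scope ring_scope.

(* Nonnegative complex numbers are real, so the archimedean property transfers. *)
Lemma bounded_multiples_eq0C (c K : CC) (p : nat -> nat) :
  (forall k, k <= p k)%N -> 0 <= c -> (forall k, (p k)%:R * c <= K) -> c = 0.
Proof.
move=> p_ge c_ge0 cK.
have c_real : c = (complex.Re c)%:C%C by case: c c_ge0 {cK} => a b /ger0_Im /= ->.
move: c_ge0 cK; rewrite c_real ler0c; move: (complex.Re c) => r r_ge0 rK.
suff -> : r = 0 by [].
apply: (@bounded_multiples_eq0 _ r (complex.Re K) p) => // k.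
by move: (rK k); rewrite lecE => /andP [_]; rewrite !mulr_natl raddfMn.
Qed.

Lemma le1_of_bounded_pow (x K : CC) (p : nat -> nat) :
  (forall k, k <= p k)%N -> 0 <= x -> (forall k, x ^+ p k <= K) -> x <= 1.
Proof.
move=> p_ge x_ge0 xK; rewrite real_leNgt ?ger0_real //; apply/negP => x_gt1.
have : x - 1 = 0.
  apply: (bounded_multiples_eq0C p_ge); first by rewrite subr_ge0 ltW.
  move=> k; apply: le_trans (xK k); apply: le_trans (bernoulli_ineq _ (ltW x_gt1)).
  by rewrite lerDr.
by move/eqP; rewrite subr_eq0 => /eqP x1; rewrite x1 ltxx in x_gt1.
Qed.

(* A power-bounded matrix has no Jordan chain of length two at the eigenvalue 1:
   if [W = D (1 - S)] is fixed by [S] then [D S^k = D - k W]. *)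
Lemma pow_bounded_range_fixed_eq0 n (S : 'M[CC]_n) r (D : 'M[CC]_(r, n)) :
  pow_bounded S -> D *m (1%:M - S) *m (1%:M - S) = 0 -> D *m (1%:M - S) = 0.
Proof.
move=> [K SK] WN0; set W := D *m (1%:M - S) in WN0 *.
have WS : W *m S = W.
  by move/eqP: WN0; rewrite mulmxBr mulmx1 subr_eq0 => /eqP.
have DS k : D *m mxpow S k = D - W *+ k.
  elim: k => [|k IHk]; first by rewrite mxpow0 mulmx1 subr0.
  rewrite mxpowSr mulmxA IHk mulmxBl -scaler_nat -scalemxAl scaler_nat WS.
  rewrite [D *m S](_ : _ = D - W); last by rewrite /W mulmxBr mulmx1 opprB addrC subrK.
  by rewrite mulrSr opprD addrA [RHS]addrAC.
apply: mxnorm_eq0; apply: (@bounded_multiples_eq0C _ (mxnorm D + mxnorm D * K) id) => //.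
  exact: mxnorm_ge0.
move=> k; rewrite -mxnormMn.
have -> : W *+ k = D - D *m mxpow S k by rewrite DS opprB addrC subrK.
apply: (le_trans (mxnormB _ _)); apply: lerD => //.
apply: (le_trans (mxnormM _ _)); apply: ler_wpM2l => //; exact: mxnorm_ge0.
Qed.

Lemma pow_bounded_fixed_plus_range n (S : 'M[CC]_n) (b : 'rV[CC]_n) :
  pow_bounded S -> exists b0 y, b0 *m S = b0 /\ b = b0 + y *m (1%:M - S).
Proof.
move=> S_bounded; set N := 1%:M - S.
have capN0 : (kermx N :&: N)%MS = 0.
  have [D WD] : exists D, (kermx N :&: N)%MS = D *m N by apply/submxP; exact: capmxSr.
  rewrite WD; apply: pow_bounded_range_fixed_eq0 => //.
  by rewrite -WD; apply/sub_kermxP; exact: capmxSl.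
have full : row_full (kermx N + N)%MS.
  apply/eqP; have := mxrank_sum_cap (kermx N) N; rewrite capN0 mxrank0 addn0 => ->.
  by rewrite mxrank_ker subnK // rank_leq_row.
have /sub_addsmxP [u ->] := submx_full b full.
exists (u.1 *m kermx N), u.2; split => //.
apply/eqP; rewrite -subr_eq0 -{2}(mulmx1 (u.1 *m kermx N)) -mulmxBr -opprB mulmxN.
by rewrite -mulmxA mulmx_ker mulmx0 oppr0.
Qed.

End ComplexPowers.

Section Corner.
Local Open Scope ring_scope.

Lemma corner_pow_unit (F : fieldType) n (l : F) (b : 'rV[F]_n) (d : 'M[F]_n) k :
  l != 0 -> l *: corner_pow l b d k = l ^+ k *: \sum_(i < k) b *m mxpow (l^-1 *: d) i.
Proof.
move=> l0; elim: k => [|k IHk]; first by rewrite big_ord0 !scaler0.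
rewrite /= scalerDr IHk big_ord_recr /= scalerDr scalerA -exprS; congr (_ + _).
rewrite mxpowZ -scalemxAr scalerA; congr (_ *: _).
by rewrite exprS -mulrA -exprMn mulfV // expr1n mulr1.
Qed.

Variables (n : nat) (l : CC) (b : 'rV[CC]_n) (d : 'M[CC]_n) (Kd : CC).
Hypothesis d_bounded : forall k, mxnorm (mxpow d k) <= Kd.

Let Kd_ge0 : 0 <= Kd.
Proof. exact: le_trans (mxnorm_ge0 _) (d_bounded 0). Qed.

Lemma corner_pow_bounded_lt1 :
  `|l| < 1 -> exists M, forall k, mxnorm (corner_pow l b d k) <= M.
Proof.
move=> l_lt1; have gap : 0 < 1 - `|l| by rewrite subr_gt0.
set M := mxnorm b * Kd / (1 - `|l|); exists M.
have M_fix : M = `|l| * M + mxnorm b * Kd by rewrite /M; field; rewrite lt0r_neq0.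
elim=> [|k IHk] /=.
  by rewrite mxnorm0 /M divr_ge0 ?mulr_ge0 ?mxnorm_ge0 ?Kd_ge0 ?ltW.
apply: (le_trans (mxnormD _ _)); rewrite mxnormZ M_fix.
apply: lerD; first exact: ler_wpM2l.
by apply: (le_trans (mxnormM _ _)); apply: ler_wpM2l => //; exact: mxnorm_ge0.
Qed.

(* Writing [b = b0 + y (1 - S)] with [S = d / l], the corner grows like [k b0]. *)
Lemma corner_pow_bounded_eq1 (p : nat -> nat) : (forall k, k <= p k)%N -> `|l| = 1 ->
  (exists K, forall k, mxnorm (corner_pow l b d (p k)) <= K) ->
  exists M, forall k, mxnorm (corner_pow l b d k) <= M.
Proof.
move=> p_ge l1 [K corner_K].
have l0 : l != 0 by rewrite -normr_eq0 l1 oner_eq0.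
set S := l^-1 *: d.
have S_bounded k : mxnorm (mxpow S k) <= Kd.
  by rewrite mxpowZ mxnormZ normrX normfV l1 invr1 expr1n mul1r.
have [b0 [y [b0S b_dec]]] := pow_bounded_fixed_plus_range b (ex_intro _ Kd S_bounded).
have corner_sum k :
    mxnorm (corner_pow l b d k) = mxnorm (b0 *+ k + (y - y *m mxpow S k)).
  have := congr1 (@mxnorm _ _ _) (corner_pow_unit b d k l0).
  by rewrite !mxnormZ normrX l1 expr1n !mul1r (sum_mxpow_fixed_range _ b0S b_dec).
pose My := mxnorm y + mxnorm y * Kd.
have y_bounded k : mxnorm (y - y *m mxpow S k) <= My.
  apply: (le_trans (mxnormB _ _)); apply: lerD => //.
  by apply: (le_trans (mxnormM _ _)); apply: ler_wpM2l => //; exact: mxnorm_ge0.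
have b00 : b0 = 0.
  apply: mxnorm_eq0; apply: (bounded_multiples_eq0C (K := K + My) p_ge).
    exact: mxnorm_ge0.
  move=> k; rewrite -mxnormMn -(addrK (y - y *m mxpow S (p k)) (b0 *+ p k)).
  by apply: (le_trans (mxnormB _ _)); apply: lerD; rewrite -?corner_sum.
by exists My => k; rewrite corner_sum b00 mul0rn add0r.
Qed.

End Corner.

Section Triangular.
Local Open Scope ring_scope.

Lemma trig_tr_block (T : ringType) n (A : 'M[T]_(1 + n)) : is_trig_mx A^T ->
  A = block_mx (A 0 0)%:M (ursubmx A) 0 (drsubmx A) /\ is_trig_mx (drsubmx A)^T.
Proof.
move=> /is_trig_mxP A_trig; split.
  rewrite -{1}(submxK A); congr block_mx.
    apply/matrixP => i j; rewrite !ord1 !mxE /= mulr1n; congr (A _ _); exact: val_inj.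
  apply/matrixP => i j; rewrite !mxE [j]ord1.
  by have := A_trig (lshift n 0) (rshift 1 i); rewrite mxE; apply.
apply/is_trig_mxP => i j ij; rewrite !mxE.
by have := A_trig (rshift 1 i) (rshift 1 j); rewrite mxE; apply; rewrite /= ltn_add2l.
Qed.

Lemma pow_bounded_trig n (T : 'M[CC]_n) (p : nat -> nat) : (forall k, k <= p k)%N ->
  is_trig_mx T^T -> pow_bounded_along T p -> pow_bounded T.
Proof.
move=> p_ge; elim: n => [|n IHn] in T *; first by move=> *; exact: pow_bounded_along0.
change 'M[CC]_(1 + n) in T; move=> /trig_tr_block [T_block d_trig] [K TK].
move: TK; rewrite {}T_block; set l := T 0 0; set b := ursubmx T; set d := drsubmx T.
have norm_pow k : mxnorm (mxpow (block_mx l%:M b 0 d) k) =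
    `|l| ^+ k + mxnorm (corner_pow l b d k) + mxnorm (mxpow d k).
  by rewrite mxpow_block mxnorm_block mxnorm_scalar1 mxnorm0 add0r normrX.
move=> TK; have [Kd d_bounded] : pow_bounded d.
  apply: (IHn _ d_trig); exists K => k; apply: le_trans (TK k).
  by rewrite norm_pow lerDr addr_ge0 ?exprn_ge0 ?mxnorm_ge0.
have l_le1 : `|l| <= 1.
  apply: (le1_of_bounded_pow p_ge (normr_ge0 l) (K := K)) => k.
  by apply: le_trans (TK k); rewrite norm_pow -addrA lerDl addr_ge0 ?mxnorm_ge0.
have [M corner_M] : exists M, forall k, mxnorm (corner_pow l b d k) <= M.
  move: l_le1; rewrite le_eqVlt => /orP [/eqP l1 | l_lt1].
    apply: (corner_pow_bounded_eq1 d_bounded p_ge l1); exists K => k.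
    apply: le_trans (TK k).
    by rewrite norm_pow (addrC (_ ^+ _)) -addrA lerDl addr_ge0 ?exprn_ge0 ?mxnorm_ge0.
  exact: corner_pow_bounded_lt1 d_bounded l_lt1.
exists (1 + M + Kd) => k; rewrite norm_pow.
by rewrite !lerD ?exprn_ile1.
Qed.

Lemma pow_bounded_of_subseq n (A : 'M[CC]_n) (p : nat -> nat) :
  (forall k, k <= p k)%N -> pow_bounded_along A p -> pow_bounded A.
Proof.
case: n A => [|n] A p_ge A_bounded; first exact: pow_bounded_along0.
have [P P_unitary] := Schur A (ltn0Sn n).
have P_unit : P \in unitmx by exact: unitarymx_unit.
rewrite /similar_to /conjmx pinvmxE // => L_trig; set L := P *m A *m invmx P in L_trig.
have L_bounded : pow_bounded L.
  rewrite -[L]trmxK; apply/pow_bounded_along_tr/(pow_bounded_trig p_ge).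
    by rewrite trmxK.
  by apply/pow_bounded_along_tr/pow_bounded_along_conj; rewrite ?mulmxV ?mulVmx.
have -> : A = invmx P *m L *m P.
  by rewrite /L !mulmxA mulVmx // mul1mx -mulmxA mulVmx // mulmx1.
by apply: pow_bounded_along_conj; rewrite ?mulmxV ?mulVmx.
Qed.

End Triangular.

Section Bridge.
Local Open Scope ring_scope.

Definition toC (z : Defs.C) : CC := Complex z.1 z.2.
Definition toM m (X : Mat m) : 'M[CC]_m := \matrix_(i, j) toC (X i j).

Lemma toM_mul m (X Y : Mat m) : toM (mmul X Y) = toM X *m toM Y.
Proof.
apply/matrixP => i j; rewrite !mxE /mmul -[index_enum _]enumT.
under eq_bigr do rewrite !mxE.
by elim: (enum 'I_m) => [|k s IHs]; rewrite ?big_nil // big_cons -IHs.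
Qed.

Lemma toM_id m : toM (@mid m) = 1%:M.
Proof. by apply/matrixP => i j; rewrite !mxE /mid; case: (i == j). Qed.

Lemma toM_pow m (A : Mat m) k : toM (mpow A k) = mxpow (toM A) k.
Proof. by elim: k => [|k IHk] /=; rewrite ?toM_id // toM_mul IHk. Qed.

Lemma toM_inj m : injective (@toM m).
Proof.
move=> X Y XY; apply: functional_extensionality => i; apply: functional_extensionality => j.
move/matrixP/(_ i j): XY; rewrite !mxE.
by case: (X i j) => a b; case: (Y i j) => c d [-> ->].
Qed.

Lemma norm_i : `|'i%C : CC| = 1.
Proof. by rewrite normc_def /= expr0n add0r expr1n sqrtr1. Qed.

Lemma Re_toC_le (z : Defs.C) : (`|z.1|%:C <= `|toC z|)%C.
Proof. exact: (normc_ge_Re (toC z)). Qed.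

Lemma Im_toC_le (z : Defs.C) : (`|z.2|%:C <= `|toC z|)%C.
Proof. by have := normc_ge_Re (toC z * 'i%C); rewrite ReiNIm normrN normrM norm_i mulr1. Qed.

Lemma toC_norm_le (z : Defs.C) : (`|toC z| <= (`|z.1| + `|z.2|)%:C)%C.
Proof.
have norm_real (r : Rdefinitions.R) : `|r%:C%C : CC| = `|r|%:C%C.
  by rewrite normc_def /= expr0n addr0 sqrtr_sqr.
rewrite [toC z]complexE rmorphD /=; apply: (le_trans (ler_normD _ _)).
by rewrite normrM norm_i mul1r !norm_real.
Qed.

End Bridge.

Section RealSequences.
Local Open Scope R_scope.

Definition strict_incr (f : nat -> nat) := forall n, Nat.lt (f n) (f (S n)).

Lemma strict_incr_ge f : strict_incr f -> forall n, (n <= f n)%coq_nat.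
Proof. by move=> f_incr; elim=> [|n IHn]; [lia | have := f_incr n; lia]. Qed.

Lemma strict_incr_lt f : strict_incr f -> forall a b, (a < b)%coq_nat -> (f a < f b)%coq_nat.
Proof.
move=> f_incr a; elim=> [|b IHb] ab; first lia.
have := f_incr b; case: (Nat.eq_dec a b) => [-> //|a_neq_b]; have := IHb ltac:(lia); lia.
Qed.

Lemma strict_incr_comp f g : strict_incr f -> strict_incr g -> strict_incr (fun n => f (g n)).
Proof. by move=> f_incr g_incr n; apply: strict_incr_lt (g_incr n). Qed.

Lemma strict_incr_add f : strict_incr f -> forall a k, (f a + k <= f (a + k))%coq_nat.
Proof.
move=> f_incr a; elim=> [|k IHk]; first by rewrite Nat.add_0_r; lia.
by have := f_incr (a + k)%coq_nat; rewrite /Nat.lt -Nat.add_succ_r; lia.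
Qed.

Lemma inv_succ_lt eps : 0 < eps -> exists N, forall n, (N <= n)%coq_nat -> / INR (S n) < eps.
Proof.
move=> eps_gt0; have [N [N_lt N_gt0]] := archimed_cor1 eps eps_gt0.
exists N => n Nn; apply: Rle_lt_trans N_lt.
by apply: Rinv_le_contravar; [apply: lt_0_INR | apply: le_INR]; lia.
Qed.

Lemma Un_cv_const c : Un_cv (fun _ => c) c.
Proof. by move=> e e_gt0; exists 0%nat => n _; rewrite /R_dist Rminus_diag Rabs_R0. Qed.

Lemma Un_cv_abs_le u l K : Un_cv u l -> (forall n, Rabs (u n) <= K) -> Rabs l <= K.
Proof. by move=> ul uK; apply: (Rle_cv_lim uK (cv_cvabs _ _ ul) (Un_cv_const K)). Qed.

Lemma Un_cv_subseq u l f : strict_incr f -> Un_cv u l -> Un_cv (fun n => u (f n)) l.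
Proof.
move=> f_incr ul eps eps_gt0; have [N uN] := ul eps eps_gt0; exists N => n Nn.
by apply: uN; have := strict_incr_ge f_incr n; lia.
Qed.

Lemma bounded_cv_subseq u K : (forall n, Rabs (u n) <= K) ->
  exists f l, strict_incr f /\ Un_cv (fun n => u (f n)) l.
Proof.
move=> uK; have [l l_adh] : exists l, ValAdh u l.
  apply: (Bolzano_Weierstrass u (fun c => -K <= c <= K) (compact_P3 _ _)) => n.
  by have := uK n; have := Rle_abs (u n); have := Rle_abs (- u n); rewrite Rabs_Ropp; lra.
have near_l n N : {k | (N <= k)%coq_nat /\ Rabs (u k - l) < / INR (S n)}.
  apply: constructive_indefinite_description.
  have pos : 0 < / INR (S n) by apply/Rinv_0_lt_compat/lt_0_INR; lia.
  have [k [Nk uk]] := l_adh (disc l (mkposreal _ pos)) N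
    (ex_intro _ (mkposreal _ pos) (fun y y_in => y_in)).
  by exists k.
pose fix f n := match n with
  | O => proj1_sig (near_l O O)
  | S n' => proj1_sig (near_l (S n') (S (f n'))) end.
have f_near n : Rabs (u (f n) - l) < / INR (S n).
  by case: n => [|n] /=; [case: (near_l 0%nat 0%nat) | case: (near_l (S n) _)] => k [].
exists f, l; split.
  by move=> n /=; case: (near_l (S n) (S (f n))) => k /= []; rewrite /Nat.lt; lia.
move=> eps eps_gt0; have [N N_eps] := inv_succ_lt eps_gt0; exists N => n Nn.
exact: Rlt_trans (f_near n) (N_eps n Nn).
Qed.

End RealSequences.

Section FiniteUniformity.
Variables (B : Type) (le : B -> B -> Prop) (join : B -> B -> B) (bot : B).
Hypotheses (le_joinl : forall a b, le a (join a b)) (le_joinr : forall a b, le b (join a b)).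

Lemma list_uniform T (l : list T) (P : T -> B -> Prop) :
  (forall t a b, le a b -> P t a -> P t b) ->
  (forall t, In t l -> exists N, P t N) -> exists N, forall t, In t l -> P t N.
Proof.
move=> P_mono; elim: l => [|x l IHl] P_ex; first by exists bot.
have [N1 PN1] := P_ex x (or_introl erefl).
have [N2 PN2] := IHl (fun t t_in => P_ex t (or_intror t_in)).
exists (join N1 N2) => t [<- | t_in]; first exact: P_mono PN1.
exact: P_mono (PN2 t t_in).
Qed.

Lemma In_enum (T : finType) (x : T) : In x (enum T).
Proof.
have : x \in enum T by rewrite mem_enum.
elim: (enum T) => [|y s IHs] //=; rewrite in_cons => /orP [/eqP ->|].
  by left.
by right; apply: IHs.
Qed.

Lemma entry_uniform m (P : 'I_m -> 'I_m -> B -> Prop) :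
  (forall i j a b, le a b -> P i j a -> P i j b) ->
  (forall i j, exists N, P i j N) -> exists N, forall i j, P i j N.
Proof.
move=> P_mono P_ex.
have [N PN] : exists N, forall i, In i (enum 'I_m) -> forall j, P i j N.
  apply: list_uniform => [i a b ab Pa j | i _]; first exact: P_mono (Pa j).
  have [N PN] := list_uniform (l := enum 'I_m) (P_mono i) (fun j _ => P_ex i j).
  by exists N => j; apply: PN; exact: In_enum.
by exists N => i; apply: PN; exact: In_enum.
Qed.

End FiniteUniformity.

Section MatrixSequences.
Local Open Scope R_scope.
Variable m : nat.
Implicit Types (u v : nat -> Mat m) (X Y Z L M : Mat m).

Definition close e X Y := forall i j,
  Rabs (fst (Y i j) - fst (X i j)) < e /\ Rabs (snd (Y i j) - snd (X i j)) < e.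

Definition entries_bounded u K :=
  forall n i j, Rabs (fst (u n i j)) <= K /\ Rabs (snd (u n i j)) <= K.

Lemma close_sym e X Y : close e X Y -> close e Y X.
Proof. by move=> XY i j; rewrite Rabs_minus_sym (Rabs_minus_sym (snd _)); apply: XY. Qed.

Lemma close_trans e1 e2 X Y Z : close e1 X Y -> close e2 Y Z -> close (e1 + e2) X Z.
Proof.
move=> XY YZ i j; have [XY1 XY2] := XY i j; have [YZ1 YZ2] := YZ i j.
have := R_dist_tri (fst (Z i j)) (fst (X i j)) (fst (Y i j)).
have := R_dist_tri (snd (Z i j)) (snd (X i j)) (snd (Y i j)).
rewrite /R_dist; lra.
Qed.

Lemma close_le e1 e2 X Y : e1 <= e2 -> close e1 X Y -> close e2 X Y.
Proof. by move=> e12 XY i j; have := XY i j; lra. Qed.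

Lemma mat_cv_close u L : mat_cv u L ->
  forall e, 0 < e -> exists N, forall n, (N <= n)%coq_nat -> close e L (u n).
Proof.
move=> uL e e_gt0.
have [N uN] : exists N, forall i j n, (N <= n)%coq_nat ->
    Rabs (fst (u n i j) - fst (L i j)) < e /\ Rabs (snd (u n i j) - snd (L i j)) < e.
  apply: (entry_uniform 0%nat Nat.le_max_l Nat.le_max_r) => [i j a b ab Pa n bn | i j].
    by apply: Pa; lia.
  have [uL1 uL2] := uL i j; have [N1 uN1] := uL1 e e_gt0; have [N2 uN2] := uL2 e e_gt0.
  by exists (Nat.max N1 N2) => n Nn; split; [apply: uN1 | apply: uN2]; lia.
by exists N => n Nn i j; apply: uN.
Qed.

Lemma close_mat_cv u L :
  (forall e, 0 < e -> exists N, forall n, (N <= n)%coq_nat -> close e L (u n)) -> mat_cv u L.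
Proof.
move=> u_close i j; split=> e e_gt0; have [N uN] := u_close e e_gt0;
  by exists N => n Nn; case: (uN n Nn i j).
Qed.

Lemma mat_cv_subseq u L f : strict_incr f -> mat_cv u L -> mat_cv (fun n => u (f n)) L.
Proof.
move=> f_incr uL i j; have [uL1 uL2] := uL i j.
by split; apply: (Un_cv_subseq (u := fun n => _ (u n i j))).
Qed.

Lemma mat_cv_unique u L1 L2 : mat_cv u L1 -> mat_cv u L2 -> L1 = L2.
Proof.
move=> uL1 uL2; apply: functional_extensionality => i; apply: functional_extensionality => j.
have [u11 u12] := uL1 i j; have [u21 u22] := uL2 i j.
move: (UL_sequence _ _ _ u11 u21) (UL_sequence _ _ _ u12 u22).
by case: (L1 i j) (L2 i j) => [a b] [c d] /= -> ->.
Qed.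

Lemma mat_cv_mmul u v L M : mat_cv u L -> mat_cv v M ->
  mat_cv (fun n => mmul (u n) (v n)) (mmul L M).
Proof.
move=> uL vM i j; rewrite /mmul.
elim: (enum 'I_m) => [|k s [IH1 IH2]]; first by split; apply: Un_cv_const.
have [uL1 uL2] := uL i k; have [vM1 vM2] := vM k j.
split => /=; apply: CV_plus => //; [apply: CV_minus | apply: CV_plus]; exact: CV_mult.
Qed.

Lemma mat_cv_bounded u L : mat_cv u L -> exists K, entries_bounded u K.
Proof.
move=> uL; have [K uK] : exists K, forall i j n,
    Rabs (fst (u n i j)) <= K /\ Rabs (snd (u n i j)) <= K.
  apply: (entry_uniform 0 Rmax_l Rmax_r) => [i j a b ab Pa n | i j].
    by have := Pa n; lra.
  have [uL1 uL2] := uL i j.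
  have [K1 [_ uK1]] := maj_by_pos _ (exist _ _ uL1).
  have [K2 [_ uK2]] := maj_by_pos _ (exist _ _ uL2).
  exists (Rmax K1 K2) => n; split.
    exact: Rle_trans (uK1 n) (Rmax_l _ _).
  exact: Rle_trans (uK2 n) (Rmax_r _ _).
by exists K => n i j; apply: uK.
Qed.

(* Bolzano-Weierstrass, one real coordinate of the matrix at a time. *)
Definition coords : list (Mat m -> R) :=
  flat_map (fun i => flat_map (fun j =>
    (fun X : Mat m => fst (X i j)) :: (fun X : Mat m => snd (X i j)) :: nil)
    (enum 'I_m)) (enum 'I_m).

Lemma bounded_cv_subseq_list (cs : list (Mat m -> R)) u K :
  (forall n c, In c cs -> Rabs (c (u n)) <= K) ->
  exists f, strict_incr f /\ forall c, In c cs -> exists l, Un_cv (fun n => c (u (f n))) l.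
Proof.
elim: cs => [|c cs IHcs] csK; first by exists id; split => // n; rewrite /Nat.lt; lia.
have [f1 [f1_incr cs_cv]] := IHcs (fun n c' c'_in => csK n c' (or_intror c'_in)).
have [f2 [l [f2_incr c_cv]]] :=
  bounded_cv_subseq (u := fun n => c (u (f1 n))) (fun n => csK _ c (or_introl erefl)).
exists (fun n => f1 (f2 n)); split; first exact: strict_incr_comp.
move=> c' [<- | c'_in]; first by exists l.
have [l' c'_cv] := cs_cv c' c'_in; exists l'.
exact: (Un_cv_subseq (u := fun n => c' (u (f1 n))) f2_incr c'_cv).
Qed.

Lemma bounded_mat_cv_subseq u K : entries_bounded u K ->
  exists f L, strict_incr f /\ mat_cv (fun n => u (f n)) L.
Proof.
move=> uK.
have coordsK n c : In c coords -> Rabs (c (u n)) <= K.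
  by case/in_flat_map => i [_ /in_flat_map [j [_ [<- | [<- | []]]]]]; case: (uK n i j).
have [f [f_incr coords_cv]] := bounded_cv_subseq_list coordsK.
have coord_in i j : In (fun X : Mat m => fst (X i j)) coords /\
                    In (fun X : Mat m => snd (X i j)) coords.
  by split; apply/in_flat_map; exists i; split; try exact: In_enum;
     apply/in_flat_map; exists j; split; try exact: In_enum; simpl; auto.
have lim1 i j := constructive_indefinite_description _ (coords_cv _ (coord_in i j).1).
have lim2 i j := constructive_indefinite_description _ (coords_cv _ (coord_in i j).2).
exists f, (fun i j => (proj1_sig (lim1 i j), proj1_sig (lim2 i j))); split => // i j.
by split; [case: (lim1 i j) | case: (lim2 i j)].
Qed.

End MatrixSequences.

Section Compactness.
Local Open Scope R_scope.
Variables (m : nat) (K : Mat m -> Prop).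

Definition seq_compact := forall x : nat -> Mat m, (forall n, K (x n)) ->
  exists f X, strict_incr f /\ K X /\ mat_cv (fun n => x (f n)) X.

Hypothesis K_seq_compact : seq_compact.

Lemma seq_compact_lebesgue_number I (U : I -> Mat m -> Prop) :
  (forall a, mat_open (U a)) -> (forall X, K X -> exists a, U a X) ->
  exists del, 0 < del /\ forall X, K X -> exists a, forall Y, close del X Y -> U a Y.
Proof.
move=> U_open K_cover; apply: NNPP => no_del.
have bad n : exists X, K X /\ forall a, exists Y, close (/ INR (S n)) X Y /\ ~ U a Y.
  apply: NNPP => no_X; apply: no_del; exists (/ INR (S n)); split.
    by apply/Rinv_0_lt_compat/lt_0_INR; lia.
  move=> X KX; apply: NNPP => no_a; apply: no_X; exists X; split => // a.
  apply: NNPP => no_Y; apply: no_a; exists a => Y XY; apply: NNPP => UY; apply: no_Y.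
  by exists Y.
have [x x_bad] := functional_choice _ bad.
have [f [X [f_incr [KX x_cv]]]] := K_seq_compact (fun n => (x_bad n).1).
have [a UX] := K_cover X KX; have [eps [eps_gt0 ballX]] := U_open a X UX.
have [N1 N1_eps] := inv_succ_lt (ltac:(lra) : 0 < eps / 2).
have [N2 N2_close] := mat_cv_close x_cv (ltac:(lra) : 0 < eps / 2).
pose n := Nat.max N1 N2; have [Y [xY not_UY]] := (x_bad (f n)).2 a.
apply/not_UY/ballX/(close_le _ (close_trans (N2_close n ltac:(lia)) xY)).
by have := N1_eps (f n) ltac:(have := strict_incr_ge f_incr n; lia); lra.
Qed.

Lemma seq_compact_totally_bounded del : 0 < del ->
  exists l : list (Mat m), (forall p, In p l -> K p) /\
    forall X, K X -> exists p, In p l /\ close del p X.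
Proof.
move=> del_gt0; apply: NNPP => no_net.
have far (l : list (Mat m)) : exists X, (forall p, In p l -> K p) ->
    K X /\ forall p, In p l -> ~ close del p X.
  case: (classic (forall p, In p l -> K p)) => [lK | ?]; last by exists (fun _ _ => C0).
  apply: NNPP => no_X; apply: no_net; exists l; split => // X KX.
  apply: NNPP => no_p; apply: no_X; exists X => _; split => // p pl pX.
  by apply: no_p; exists p.
have [next next_far] := functional_choice _ far.
pose fix net n := if n is S n' then next (net n') :: net n' else nil.
have netK n p : In p (net n) -> K p.
  elim: n p => [|n IHn] p //= [<- | pn]; [exact: (next_far _ IHn).1 | exact: IHn].
have net_in k n : (k < n)%coq_nat -> In (next (net k)) (net n).
  elim: n => [|n IHn] kn; first lia.
  by case: (Nat.eq_dec k n) => [-> | k_neq_n]; [left | right; apply: IHn; lia].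
have [f [X [f_incr [_ x_cv]]]] := K_seq_compact (fun n => (next_far _ (netK n)).1).
have [N N_close] := mat_cv_close x_cv (ltac:(lra) : 0 < del / 2).
apply: ((next_far _ (netK (f (S N)))).2 (next (net (f N)))); first exact/net_in/f_incr.
have := close_trans (close_sym (N_close N (le_n _))) (N_close (S N) (le_S _ _ (le_n N))).
by apply: close_le; lra.
Qed.

Lemma seq_compact_compact : mat_compact K.
Proof.
move=> I U U_open K_cover.
have [del [del_gt0 lebesgue]] := seq_compact_lebesgue_number U_open K_cover.
have [l [lK l_net]] := seq_compact_totally_bounded del_gt0.
have [la la_cover] : exists la : list I,
    forall p, In p l -> exists a, In a la /\ forall Y, close del p Y -> U a Y.
  elim: l lK {l_net} => [|p l IHl] lK; first by exists nil.
  have [la la_cover] := IHl (fun q ql => lK q (or_intror ql)).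
  have [a pa] := lebesgue p (lK p (or_introl erefl)).
  exists (a :: la) => q [<- | ql]; first by exists a; split; first left.
  by have [b [bla qb]] := la_cover q ql; exists b; split; first right.
exists la => X KX; have [p [pl pX]] := l_net X KX.
by have [a [ala pa]] := la_cover p pl; exists a; split; last exact: pa.
Qed.

End Compactness.

Section PowerBoundTransfer.
Local Open Scope ring_scope.

Lemma mmulA m (X Y Z : Mat m) : mmul X (mmul Y Z) = mmul (mmul X Y) Z.
Proof. by apply: toM_inj; rewrite !toM_mul mulmxA. Qed.

Lemma mpowD m (A : Mat m) a b : mpow A (a + b) = mmul (mpow A a) (mpow A b).
Proof. by apply: toM_inj; rewrite toM_mul !toM_pow mxpowD. Qed.

Lemma mpow_bounded_of_subseq m (A : Mat m) (phi : nat -> nat) K : strict_incr phi ->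
  entries_bounded (fun n => mpow A (phi n)) K -> exists K', entries_bounded (mpow A) K'.
Proof.
move=> phi_incr phiK.
have [K' AK'] : pow_bounded (toM A).
  apply: (@pow_bounded_of_subseq _ _ phi) => [k | ]; first exact/ssrnat.leP/strict_incr_ge.
  exists (\sum_(i < m) \sum_(j < m) (K + K)%:C%C) => k; rewrite -toM_pow.
  apply: ler_sum => i _; apply: ler_sum => j _; rewrite mxE.
  apply: le_trans (toC_norm_le _) _; rewrite lecR.
  by have [K1 K2] := phiK k i j; apply: lerD; apply/RleP.
exists (complex.Re K') => n i j.
have entry_le : `|toC (mpow A n i j)| <= K'.
  by have := mxnorm_entry (toM (mpow A n)) i j; rewrite mxE toM_pow => /le_trans; apply.
have := le_trans (Re_toC_le _) entry_le; rewrite lecE => /andP [_ /RleP Re_le].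
have := le_trans (Im_toC_le _) entry_le; rewrite lecE => /andP [_ /RleP Im_le].
by [].
Qed.

End PowerBoundTransfer.

Section LimitPoints.
Local Open Scope R_scope.
Variables (m : nat) (A : Mat m).
Local Notation G := (limit_points A).

Lemma limit_point_pow_bounded L : G L -> exists K, entries_bounded (mpow A) K.
Proof.
move=> [phi [phi_incr phi_cv]]; have [K phiK] := mat_cv_bounded phi_cv.
exact: mpow_bounded_of_subseq phi_incr phiK.
Qed.

Lemma limit_points_mmul X Y : G X -> G Y -> G (mmul X Y).
Proof.
move=> [phi [phi_incr X_cv]] [psi [psi_incr Y_cv]].
exists (fun n => (phi n + psi n)%nat); split.
  by move=> n; have := phi_incr n; have := psi_incr n; rewrite /Nat.lt; lia.
under [fun n => _]functional_extensionality do rewrite mpowD.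
exact: mat_cv_mmul.
Qed.

Lemma limit_points_comm X Y : G X -> G Y -> mmul X Y = mmul Y X.
Proof.
move=> [phi [phi_incr X_cv]] [psi [psi_incr Y_cv]].
apply: (mat_cv_unique (mat_cv_mmul X_cv Y_cv)).
under [fun n => _]functional_extensionality do rewrite -!mpowD addnC !mpowD.
exact: mat_cv_mmul.
Qed.

Variable K : R.
Hypothesis A_bounded : entries_bounded (mpow A) K.

Lemma limit_points_bounded x : (forall n, G (x n)) -> entries_bounded x K.
Proof.
move=> xG n i j; have [phi [_ phi_cv]] := xG n; have [cv1 cv2] := phi_cv i j.
by split; [apply: (Un_cv_abs_le cv1) | apply: (Un_cv_abs_le cv2)] => k;
  case: (A_bounded (phi k) i j).
Qed.

(* [g] is chosen so that the exponents [psi (g n) - phi n] increase. *)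
Lemma limit_points_div X Y : G X -> G Y -> exists Z, G Z /\ mmul Z X = Y.
Proof.
move=> [phi [phi_incr X_cv]] [psi [psi_incr Y_cv]].
pose g n := (phi n + n)%coq_nat.
have g_incr : strict_incr g by move=> n; have := phi_incr n; rewrite /g /Nat.lt; lia.
have phi_le n : (phi n <= psi (g n))%coq_nat.
  by have := strict_incr_ge psi_incr (g n); rewrite /g; lia.
pose d n := (psi (g n) - phi n)%coq_nat.
have d_incr : strict_incr d.
  move=> n; have phi_lt := phi_incr n; rewrite /Nat.lt in phi_lt.
  have shift := strict_incr_add psi_incr (g n) (phi (S n) - phi n + 1).
  have g_shift : (g n + (phi (S n) - phi n + 1) = g (S n))%coq_nat by rewrite /g; lia.
  rewrite g_shift in shift; have := phi_le n; have := phi_le (S n).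
  by rewrite /d /g /Nat.lt in shift *; lia.
have [h [Z [h_incr Z_cv]]] := bounded_mat_cv_subseq (fun n => A_bounded (d n)).
exists Z; split; first by exists (fun n => d (h n)); split; first exact: strict_incr_comp.
apply: (mat_cv_unique _ (mat_cv_subseq (strict_incr_comp g_incr h_incr) Y_cv)).
have -> : (fun n => mpow A (psi (g (h n)))) =
          (fun n => mmul (mpow A (d (h n))) (mpow A (phi (h n)))).
  apply: functional_extensionality => n; rewrite -mpowD /d; congr mpow.
  by have := phi_le (h n); lia.
exact: mat_cv_mmul Z_cv (mat_cv_subseq (u := fun n => mpow A (phi n)) h_incr X_cv).
Qed.

Lemma limit_points_closed x X : (forall n, G (x n)) -> mat_cv x X -> G X.
Proof.
move=> xG x_cv.
have near_pow n p : {k | (p < k)%coq_nat /\ close (/ INR (S n)) (x n) (mpow A k)}.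
  apply: constructive_indefinite_description.
  have [phi [phi_incr phi_cv]] := xG n.
  have [N phiN] := mat_cv_close phi_cv (Rinv_0_lt_compat _ (lt_0_INR _ (Nat.lt_0_succ n))).
  exists (phi (Nat.max N (S p))); split; last by apply: phiN; lia.
  by have := strict_incr_ge phi_incr (Nat.max N (S p)); lia.
pose fix e n := proj1_sig (near_pow n (if n is S n' then e n' else O)).
have e_near n : close (/ INR (S n)) (x n) (mpow A (e n)).
  by case: n => [|n]; rewrite /=; case: (near_pow _ _) => k [].
exists e; split; first by move=> n /=; case: (near_pow _ _) => k [].
apply: close_mat_cv => eps eps_gt0.
have [N1 N1_eps] := inv_succ_lt (ltac:(lra) : 0 < eps / 2).
have [N2 N2_close] := mat_cv_close x_cv (ltac:(lra) : 0 < eps / 2).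
exists (Nat.max N1 N2) => n n_ge.
apply: (close_le _ (close_trans (N2_close n ltac:(lia)) (e_near n))).
by have := N1_eps n ltac:(lia); lra.
Qed.

Lemma limit_points_seq_compact : seq_compact G.
Proof.
move=> x xG; have [f [X [f_incr x_cv]]] := bounded_mat_cv_subseq (limit_points_bounded xG).
by exists f, X; split => //; split => //; apply: (limit_points_closed _ x_cv).
Qed.

End LimitPoints.

Lemma abelian_group_mul_of_div m (G : Mat m -> Prop) X0 : G X0 ->
  (forall X Y, G X -> G Y -> G (mmul X Y)) ->
  (forall X Y, G X -> G Y -> mmul X Y = mmul Y X) ->
  (forall X Y, G X -> G Y -> exists Z, G Z /\ mmul Z X = Y) ->
  abelian_group_mul G.
Proof.
move=> GX0 G_mul G_comm G_div; split => //; split; first by move=> *; exact: mmulA.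
have [E [GE EX0]] := G_div X0 X0 GX0 GX0.
have E_unit X : G X -> mmul E X = X.
  move=> GX; have [Z [GZ <-]] := G_div X0 X GX0 GX.
  by rewrite mmulA (G_comm E Z GE GZ) -mmulA EX0.
exists E; split => //; split; first by move=> X GX; rewrite (G_comm X E) // E_unit.
split => // X GX; have [Z [GZ ZX]] := G_div X E GX GE.
by exists Z; split => //; rewrite G_comm.
Qed.

Theorem mainTheorem13 (m : nat) (A : Mat m) :
  (exists L, limit_points A L) ->
  mat_compact (limit_points A) /\ abelian_group_mul (limit_points A).
Proof.
move=> [L0 GL0]; have [K A_bounded] := limit_point_pow_bounded GL0.
split; first exact/seq_compact_compact/(limit_points_seq_compact A_bounded).
apply: (abelian_group_mul_of_div GL0).
- exact: limit_points_mmul.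
- exact: limit_points_comm.
- exact: limit_points_div A_bounded.
Qed.
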